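(* Let $X$ be a finite set with similarity function $S$, suppose the target clustering $\mathcal{C}^{\ast}$ satisfies stability with respect to $S$, and suppose the initial clustering has correlation-clustering error $\delta_{cc}$. In the $\eta$-merge model, for any $\eta>2/3$, the interactive algorithm using the global split procedure and the correlation-clustering merge procedure (described below) requires at most $\delta_{cc}$ edit requests to find the target clustering.
   Context: For nonempty $A,A'\subseteq X$, $S(A,A')$ is the average of $S(x,y)$ over $x\in A,y\in A'$. $\mathcal{C}^{\ast}=\{C^{\ast}_1,\dots,C^{\ast}_k\}$ satisfies stability w.r.t. $S$ if for all $i\neq j$, every nonempty proper $A\subset C^{\ast}_i$ and nonempty $A'\subseteq C^{\ast}_j$: $S(A,C^{\ast}_i\setminus A)>S(A,A')$. For a clustering $\mathcal{C}$, $\delta_{cc}=|\{(u,v)\in X\times X: c(u,v)\neq c^{\ast}(u,v)\}|$, where $c(u,v)=1$ if $u,v$ lie in the same cluster of $\mathcal{C}$ and $0$ otherwise, and $c^{\ast}$ is defined likewise for $\mathcal{C}^{\ast}$. Average-linkage tree $T_{glob}$: leaves are singletons; repeatedly merge the two current nodes $N_1,N_2$ with largest $S(N_1,N_2)$ (ties arbitrary) into parent $N_1\cup N_2$ until the root $X$ remains. Process ($\eta$-merge model): starting from the initial clustering, an oracle repeatedly issues split$(C_i)$ (only if current cluster $C_i$ contains points from two or more target clusters) or merge$(C_i,C_j)$ for distinct current clusters (only if some target cluster $C^{\ast}_l$ has $|C_i\cap C^{\ast}_l|\ge\eta|C_i|$ and $|C_j\cap C^{\ast}_l|\ge\eta|C_j|$).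 Split procedure: let $N$ be the deepest node of $T_{glob}$ containing $C_i$, with children $N_1,N_2$; replace $C_i$ by $C_i\cap N_1$ and $C_i\cap N_2$. Correlation-clustering merge procedure: find a node $N$ of $T_{glob}$ of maximal depth with $|N\cap C_i|\ge\eta|C_i|$ and $|N\cap C_j|\ge\eta|C_j|$; if $|C_i|\ge|C_j|$, replace $C_i$ by $C_i\cup(N\cap C_j)$ and $C_j$ by $C_j\setminus N$; otherwise replace $C_i$ by $C_i\setminus N$ and $C_j$ by $C_j\cup(N\cap C_i)$ (empty clusters are discarded). The bound is on the number of requests before the current clustering equals $\mathcal{C}^{\ast}$, for any sequence of allowed requests. *)

From HB Require Import structures.
From mathcomp Require Import all_boot all_order all_algebra.
Set Implicit Arguments.
Unset Strict Implicit.
Unset Printing Implicit Defensive.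
Import Order.TTheory GRing.Theory Num.Theory.
Local Open Scope ring_scope.

Section ClusterDefs.
Variables (R : realFieldType) (X : finType).

Definition Savg (S : X -> X -> R) (A B : {set X}) : R :=
  (\sum_(x in A) \sum_(y in B) S x y) / (#|A| * #|B|)%:R.

Definition stable (S : X -> X -> R) (T : {set {set X}}) : Prop :=
  forall Ci Cj, Ci \in T -> Cj \in T -> Ci != Cj ->
  forall A A' : {set X}, A != set0 -> A \proper Ci -> A' != set0 -> A' \subset Cj ->
    Savg S A A' < Savg S A (Ci :\: A).

Definition same_cluster (P : {set {set X}}) (u v : X) : bool :=
  [exists B in P, (u \in B) && (v \in B)].

Definition delta_cc (P T : {set {set X}}) : nat :=
  #|[set uv : X * X | same_cluster P uv.1 uv.2 != same_cluster T uv.1 uv.2]|.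

(* Average-linkage tree, represented by its sequence of merges (N1,N2). *)
Definition singletons : {set {set X}} := [set [set x] | x : X].

Definition merge_part (P : {set {set X}}) (p : {set X} * {set X}) :
  {set {set X}} := (p.1 :|: p.2) |: ((P :\ p.1) :\ p.2).

Definition linkage_part (ms : seq ({set X} * {set X})) (i : nat) :=
  foldl merge_part singletons (take i ms).

Definition avg_linkage_tree (S : X -> X -> R) (ms : seq ({set X} * {set X}))
  : Prop :=
  (forall i, (i < size ms)%N ->
     let P := linkage_part ms i in
     let p := nth (set0, set0) ms i in
     [/\ p.1 \in P, p.2 \in P, p.1 != p.2 &
       forall M1 M2, M1 \in P -> M2 \in P -> M1 != M2 ->
         Savg S M1 M2 <= Savg S p.1 p.2])
  /\ linkage_part ms (size ms) = [set [set: X]].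

Definition tree_nodes (ms : seq ({set X} * {set X})) : {set {set X}} :=
  singletons :|: [set p.1 :|: p.2 | p in ms].

Definition depth (ms : seq ({set X} * {set X})) (N : {set X}) : nat :=
  #|[set M in tree_nodes ms | N \proper M]|.

Definition eta_big (eta : R) (N C : {set X}) : bool :=
  eta * #|C|%:R <= #|N :&: C|%:R.

Definition split_allowed (T P : {set {set X}}) (C : {set X}) : Prop :=
  C \in P /\ exists A B, [/\ A \in T, B \in T, A != B,
                            C :&: A != set0 & C :&: B != set0].

Definition merge_allowed (eta : R) (T P : {set {set X}}) (Ci Cj : {set X})
  : Prop :=
  [/\ Ci \in P, Cj \in P, Ci != Cj &
      exists Cl, [&& Cl \in T, eta_big eta Cl Ci & eta_big eta Cl Cj]].

(* global split procedure: Q is a possible outcome of split(C) on P *)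
Definition split_result (ms : seq ({set X} * {set X})) (P : {set {set X}})
  (C : {set X}) (Q : {set {set X}}) : Prop :=
  exists N N1 N2, [/\ N \in tree_nodes ms, C \subset N,
    (forall M, M \in tree_nodes ms -> C \subset M ->
        (depth ms M <= depth ms N)%N),
    (N1, N2) \in ms /\ N = N1 :|: N2 &
    Q = (C :&: N1) |: ((C :&: N2) |: (P :\ C))].

(* correlation-clustering merge procedure; empty clusters discarded *)
Definition merge_result (eta : R) (ms : seq ({set X} * {set X}))
  (P : {set {set X}}) (Ci Cj : {set X}) (Q : {set {set X}}) : Prop :=
  exists N, [/\ N \in tree_nodes ms, eta_big eta N Ci, eta_big eta N Cj,
    (forall M, M \in tree_nodes ms -> eta_big eta M Ci -> eta_big eta M Cj ->
        (depth ms M <= depth ms N)%N) &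
    Q = (if (#|Cj| <= #|Ci|)%N
         then [set Ci :|: (N :&: Cj); Cj :\: N] :|: ((P :\ Ci) :\ Cj)
         else [set Ci :\: N; Cj :|: (N :&: Ci)] :|: ((P :\ Ci) :\ Cj))
        :\ set0].

Definition edit_step (eta : R) (T : {set {set X}}) (ms : seq ({set X} * {set X}))
  (P Q : {set {set X}}) : Prop :=
  (exists C, split_allowed T P C /\ split_result ms P C Q) \/
  (exists Ci Cj, merge_allowed eta T P Ci Cj /\ merge_result eta ms P Ci Cj Q).

(* P0 -> Ps_0 -> Ps_1 -> ... is a sequence of edit requests and their outcomes,
   the oracle only issuing requests while the current clustering is not T. *)
Definition edit_run (eta : R) (T : {set {set X}}) (ms : seq ({set X} * {set X}))
  (P0 : {set {set X}}) (Ps : seq {set {set X}}) : Prop :=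
  forall i, (i < size Ps)%N ->
    nth P0 (P0 :: Ps) i != T /\
    edit_step eta T ms (nth P0 (P0 :: Ps) i) (nth P0 Ps i).

End ClusterDefs.

From mathcomp Require Import all_boot all_order all_algebra.
From mathcomp Require Import lra.
Import Order.TTheory GRing.Theory Num.Theory.
Local Open Scope ring_scope.
Set Implicit Arguments.
Unset Strict Implicit.
Unset Printing Implicit Defensive.

(* Every edit request strictly decreases delta_cc, hence there are at most delta_cc of them.
   Stability prevents average linkage from ever merging a proper part of a target cluster
   with anything outside it, so every node of the tree either lies inside one target cluster
   or is a union of target clusters.  A split therefore only separates pairs that lie in
   different target clusters.  For a merge, the deepest node N that is eta-big in both
   clusters lies inside the target cluster Cl witnessing the request; moving N :&: Cj into
   the larger cluster Ci repairs every pair between the moved points and Ci :&: Cl, and can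
   only spoil pairs between the moved points and (Ci :\: Cl) :|: (Cj :\: N), a set smaller
   than Ci :&: Cl because (1 - eta) (|Ci| + |Cj|) <= 2 (1 - eta) |Ci| < eta |Ci| when
   eta > 2/3. *)

Section Partitions.
Variable X : finType.
Implicit Types (P Q New Old : {set {set X}}) (B C : {set X}).

Record is_partition P : Prop := IsPartition {
  partition_set0 : set0 \notin P;
  partition_cover : forall x, exists2 B, B \in P & x \in B;
  partition_uniq : forall B B' x, B \in P -> B' \in P -> x \in B -> x \in B' -> B = B' }.

Lemma partition_setT_is_partition P : partition P [set: X] -> is_partition P.
Proof.
case/and3P=> /eqP covP trivP P0; split=> // [x|B B' x PB PB' xB xB'].
  have : x \in cover P by rewrite covP inE.
  by case/bigcupP=> B PB xB; exists B.
apply/eqP/negPn/negP=> neqBB'.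
by have := trivIsetP trivP B B' PB PB' neqBB'; move/disjointFr/(_ xB); rewrite xB'.
Qed.

Lemma partition_neq0 P B : is_partition P -> B \in P -> B != set0.
Proof. by case=> P0 _ _ PB; apply: contraNneq P0 => <-. Qed.

Lemma same_clusterE P B u v :
  is_partition P -> B \in P -> u \in B -> same_cluster P u v = (v \in B).
Proof.
case=> _ _ uniqP PB uB; apply/existsP/idP => [[B' /and3P[PB' uB' vB']]|vB].
  by rewrite (uniqP _ _ _ PB PB' uB uB').
by exists B; rewrite PB uB vB.
Qed.

Lemma same_clusterC P u v : same_cluster P u v = same_cluster P v u.
Proof. by apply/existsP/existsP => -[B /and3P[? ? ?]]; exists B; apply/and3P. Qed.

Lemma same_cluster_stable P Q u v : is_partition P -> is_partition Q ->
  (forall B, B \in P -> u \in B -> B \in Q) -> same_cluster Q u v = same_cluster P u v.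
Proof.
move=> pP pQ PQ; have [B PB uB] := partition_cover pP u.
by rewrite (same_clusterE _ pP PB uB) (same_clusterE _ pQ (PQ _ PB uB) uB).
Qed.

Lemma is_partition_replace P Q Old New : is_partition P -> Old \subset P ->
  (forall B, (B \in Q) = (B \in New) || (B \in P) && (B \notin Old)) ->
  set0 \notin New ->
  (forall B B' x, B \in New -> B' \in New -> x \in B -> x \in B' -> B = B') ->
  (forall B x, B \in Old -> x \in B -> exists2 B', B' \in New & x \in B') ->
  (forall B x, B \in New -> x \in B -> exists2 B', B' \in Old & x \in B') ->
  is_partition Q.
Proof.
move=> pP /subsetP OldP Q_E New0 uniqNew coverNew coverOld; split.
- by rewrite Q_E negb_or New0 negb_and (partition_set0 pP).
- move=> x; have [B PB xB] := partition_cover pP x.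
  have [OldB|OldB] := boolP (B \in Old).
    by have [B' NewB' xB'] := coverNew _ _ OldB xB; exists B'; rewrite // Q_E NewB'.
  by exists B; rewrite // Q_E PB OldB orbT.
have mixed B B' x : B \in New -> B' \in P -> B' \notin Old -> x \in B -> x \in B' -> False.
  move=> NewB PB' OldB' xB xB'; have [B'' OldB'' xB''] := coverOld _ _ NewB xB.
  by rewrite -(partition_uniq pP (OldP _ OldB'') PB' xB'' xB') OldB'' in OldB'.
move=> B B' x; rewrite !Q_E => /orP[NewB|/andP[PB OldB]] /orP[NewB'|/andP[PB' OldB']] xB xB'.
- exact: uniqNew NewB NewB' xB xB'.
- by case: (mixed _ _ _ NewB PB' OldB' xB xB').
- by case: (mixed _ _ _ NewB' PB OldB xB' xB).
- exact: (partition_uniq pP PB PB' xB xB').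
Qed.

Lemma subsetU_setI0 B1 B2 C : C \subset B1 :|: B2 -> C :&: B1 == set0 -> C \subset B2.
Proof. by move=> sC; rewrite setI_eq0 => /setDidPl <-; rewrite subDset. Qed.

End Partitions.

Definition cc_errors (X : finType) (P T : {set {set X}}) : {set X * X} :=
  [set uv | same_cluster P uv.1 uv.2 != same_cluster T uv.1 uv.2].

Lemma delta_ccE (X : finType) (P T : {set {set X}}) : delta_cc P T = #|cc_errors P T|.
Proof. by []. Qed.

Lemma card_exchange_lt (T : finType) (A B G L : {set T}) :
  B \subset (A :\: G) :|: L -> G \subset A -> (#|L| < #|G|)%N -> (#|B| < #|A|)%N.
Proof.
move=> sB sGA ltLG; rewrite -(cardsID G A) (setIidPr sGA) addnC.
apply: leq_ltn_trans (subset_leq_card sB) _; apply: leq_ltn_trans (leq_card_setU _ _) _.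
by rewrite ltn_add2l.
Qed.

Section BlockSurgery.
Variable X : finType.
Implicit Types (P Q : {set {set X}}) (A C Ci Cj M : {set X}).

Lemma split_block P Q C A : is_partition P -> C \in P ->
  C :&: A != set0 -> C :\: A != set0 ->
  Q = (C :&: A) |: ((C :\: A) |: (P :\ C)) ->
  is_partition Q /\ forall u v, same_cluster Q u v =
    same_cluster P u v && ((u \notin C) || ((u \in A) == (v \in A))).
Proof.
move=> pP PC CA0 CnA0 defQ.
have Q_E B : (B \in Q) = (B \in [set C :&: A; C :\: A]) || (B \in P) && (B \notin [set C]).
  by rewrite defQ !inE orbA andbC.
have pQ : is_partition Q.
  apply: (is_partition_replace pP _ Q_E); first by rewrite sub1set.
  - by rewrite !inE !(eq_sym set0) negb_or CA0.
  - move=> B B' x; rewrite !inE => /orP[]/eqP-> /orP[]/eqP->; rewrite // !inE;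
      by case: (x \in A); rewrite ?andbF.
  - move=> B x; rewrite inE => /eqP-> xC.
    by case xA: (x \in A); [exists (C :&: A) | exists (C :\: A)]; rewrite !inE ?xC ?xA ?eqxx ?orbT.
  - move=> B x; rewrite !inE => /orP[]/eqP->; rewrite inE => /andP[xC xA];
      by exists C; rewrite ?inE.
split=> // u v; have [uC|uC] /= := boolP (u \in C); last first.
  rewrite andbT; apply: same_cluster_stable => // B PB uB.
  by rewrite Q_E PB !inE; apply/orP; right; apply: contraNneq uC => <-.
rewrite (same_clusterE _ pP PC uC); have [uA|uA] := boolP (u \in A).
  have QCA : C :&: A \in Q by rewrite Q_E !inE eqxx.
  by rewrite (same_clusterE _ pQ QCA) ?inE ?uC ?uA // eq_sym eqb_id.
have QCnA : C :\: A \in Q by rewrite Q_E !inE eqxx orbT.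
by rewrite (same_clusterE _ pQ QCnA) ?inE ?uC ?uA // andbC eq_sym eqbF_neg.
Qed.

Lemma move_subblock P Q Ci Cj M :
  is_partition P -> Ci \in P -> Cj \in P -> Ci != Cj -> M \subset Cj ->
  Q = ([set Ci :|: M; Cj :\: M] :|: ((P :\ Ci) :\ Cj)) :\ set0 ->
  [/\ is_partition Q,
      forall u v, (u \in M) = (v \in M) -> same_cluster Q u v = same_cluster P u v &
      forall u v, u \in M -> v \notin M -> same_cluster Q u v = (v \in Ci)].
Proof.
move=> pP PCi PCj Cij /subsetP MCj defQ.
have disj x : x \in Ci -> x \in Cj -> False.
  by move=> xi xj; move: Cij; rewrite (partition_uniq pP PCi PCj xi xj) eqxx.
have Q_E B : (B \in Q) =
    (B \in [set Ci :|: M; Cj :\: M] :\ set0) || (B \in P) && (B \notin [set Ci; Cj]).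
  rewrite defQ !inE; have [->|_] //= := eqVneq B set0.
    by rewrite (negPf (partition_set0 pP)).
  by rewrite negb_or andbA andbC [(B != Cj) && _]andbC.
have inNew B x : B \in [set Ci :|: M; Cj :\: M] -> x \in B ->
    B \in [set Ci :|: M; Cj :\: M] :\ set0.
  by move=> newB xB; rewrite in_setD1 newB andbT; apply/set0Pn; exists x.
have pQ : is_partition Q.
  apply: (is_partition_replace pP _ Q_E).
  - by apply/subsetP => B; rewrite !inE => /orP[]/eqP->.
  - by rewrite !inE eqxx.
  - move=> B B' x; rewrite !inE => /andP[_ /orP[]/eqP->] /andP[_ /orP[]/eqP->] //; rewrite !inE.
      by case/orP=> [xi|xM] /andP[xnM xj]; [case: (disj x) | rewrite xM in xnM].
    by case/andP=> xnM xj /orP[xi|xM]; [case: (disj x) | rewrite xM in xnM].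
  - move=> B x; rewrite !inE => /orP[]/eqP-> xB.
      by exists (Ci :|: M); [apply: (inNew _ x) | ]; rewrite !inE ?eqxx ?xB.
    case xM: (x \in M).
      by exists (Ci :|: M); [apply: (inNew _ x) |]; rewrite !inE ?eqxx ?xB ?xM ?orbT.
    by exists (Cj :\: M); [apply: (inNew _ x) |]; rewrite !inE ?eqxx ?xB ?xM ?orbT.
  - move=> B x; rewrite in_setD1 !inE => /andP[_ /orP[]/eqP->]; rewrite !inE.
      by case/orP=> [xi|/MCj xj]; [exists Ci | exists Cj]; rewrite ?inE ?eqxx ?orbT.
    by case/andP=> _ xj; exists Cj; rewrite ?inE ?eqxx ?orbT.
have QX1 : Ci :|: M \in Q.
  have /set0Pn[x xi] := partition_neq0 pP PCi.
  by rewrite Q_E (inNew _ x) ?inE ?eqxx ?xi.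
have QX2 u : u \in Cj :\: M -> Cj :\: M \in Q.
  by move=> uX2; rewrite Q_E (inNew _ u) // !inE eqxx orbT.
have scX1 u v : u \in Ci :|: M -> same_cluster Q u v = (v \in Ci) || (v \in M).
  by move=> uX1; rewrite (same_clusterE _ pQ QX1 uX1) inE.
have nMi u : u \in Ci -> u \notin M by move=> ui; apply/negP => /MCj /(disj _ ui).
split=> // u v; last first.
  by move=> uM /negPf vM; rewrite scX1 ?inE ?uM ?orbT // vM orbF.
move=> uvM; have [ui|ui] := boolP (u \in Ci).
  by rewrite scX1 ?inE ?ui // (same_clusterE _ pP PCi ui) -uvM (negPf (nMi _ ui)) orbF.
have [uM|uM] := boolP (u \in M).
  have vM : v \in M by rewrite -uvM.
  by rewrite scX1 ?inE ?uM ?orbT // (same_clusterE _ pP PCj (MCj _ uM)) vM MCj ?orbT.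
have [uj|uj] := boolP (u \in Cj).
  have uX2 : u \in Cj :\: M by rewrite inE uM uj.
  by rewrite (same_clusterE _ pQ (QX2 _ uX2) uX2) (same_clusterE _ pP PCj uj) inE -uvM uM.
apply: same_cluster_stable => // B PB uB; rewrite Q_E PB !inE; apply/orP; right.
by apply/norP; split; [apply: contraNneq ui | apply: contraNneq uj] => <-.
Qed.

Lemma is_partition_merge_part P (p : {set X} * {set X}) :
  is_partition P -> p.1 \in P -> p.2 \in P -> p.1 != p.2 -> is_partition (merge_part P p).
Proof.
move=> pP P1 P2 p12.
apply: (is_partition_replace (Old := [set p.1; p.2]) (New := [set p.1 :|: p.2]) pP).
- by apply/subsetP => B; rewrite !inE => /orP[]/eqP->.
- by move=> B; rewrite /merge_part !inE negb_or andbC andbA [_ && (B != p.1)]andbC.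
- rewrite !inE eq_sym; apply/set0Pn; have /set0Pn[x x1] := partition_neq0 pP P1.
  by exists x; rewrite inE x1.
- by move=> B B' x; rewrite !inE => /eqP-> /eqP->.
- by move=> B x; rewrite !inE => /orP[]/eqP-> xB; exists (p.1 :|: p.2); rewrite !inE ?xB ?orbT.
- move=> B x; rewrite inE => /eqP-> /setUP[x1|x2]; [exists p.1 | exists p.2];
    by rewrite ?inE ?eqxx ?orbT.
Qed.

End BlockSurgery.

Section Averages.
Variables (R : realFieldType) (X : finType) (S : X -> X -> R).
Implicit Types (P : {set {set X}}) (A B D E Q : {set X}).

Definition col_excess A (c : R) (y : X) := \sum_(x in A) S x y - c * #|A|%:R.

Lemma Savg_ltE A E c : A != set0 -> E != set0 ->
  (Savg S A E < c) = (\sum_(y in E) col_excess A c y < 0).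
Proof.
move=> A0 E0; rewrite /Savg ltr_pdivrMr ?ltr0n ?muln_gt0 ?card_gt0 ?A0 //.
by rewrite /col_excess sumrB sumr_const subr_lt0 exchange_big natrM mulrA !mulr_natr.
Qed.

Lemma Savg_lt_partition P A D c : is_partition P -> A != set0 -> D != set0 ->
  (forall Q, Q \in P -> D :&: Q != set0 -> Savg S A (D :&: Q) < c) ->
  Savg S A D < c.
Proof.
move=> pP A0 D0 ltQ; rewrite Savg_ltE //.
have -> : \sum_(y in D) col_excess A c y =
    \sum_(Q in P) \sum_(y in D :&: Q) col_excess A c y.
  transitivity (\sum_(y in D) \sum_(Q in P) (if y \in Q then col_excess A c y else 0)).
    apply: eq_bigr => y Dy; have [By PBy yBy] := partition_cover pP y.
    rewrite (bigD1 By) //= yBy big1 ?addr0 // => Q /andP[PQ QBy].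
    by case: ifP => // yQ; rewrite (partition_uniq pP PQ PBy yQ yBy) eqxx in QBy.
  rewrite exchange_big; apply: eq_bigr => Q PQ; rewrite -big_mkcondr.
  by apply: eq_bigl => y; rewrite inE.
have /set0Pn[y Dy] := D0; have [By PBy yBy] := partition_cover pP y.
have DBy0 : D :&: By != set0 by apply/set0Pn; exists y; rewrite inE Dy yBy.
have ltBy : \sum_(y in D :&: By) col_excess A c y < 0 by rewrite -Savg_ltE // ltQ.
have le_rest : \sum_(Q in P | Q != By) \sum_(y in D :&: Q) col_excess A c y <= 0.
  apply: sumr_le0 => Q /andP[PQ _].
  have [->|DQ0] := eqVneq (D :&: Q) set0; first by rewrite big_set0.
  by apply: ltW; rewrite -Savg_ltE // ltQ.
by rewrite (bigD1 By) //=; lra.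
Qed.

Lemma SavgC A B : (forall x y, S x y = S y x) -> Savg S A B = Savg S B A.
Proof.
move=> SC; rewrite /Savg exchange_big mulnC; congr (_ / _).
by apply: eq_bigr => y _; apply: eq_bigr => x _.
Qed.

End Averages.

Section TargetCompatible.
Variables (R : realFieldType) (X : finType) (S : X -> X -> R) (T : {set {set X}}).
Hypothesis pT : is_partition T.
Implicit Types (P : {set {set X}}) (B M N Q : {set X}).

Definition within_target M := [exists B in T, M \subset B].
Definition union_of_targets M := [forall B in T, (B :&: M != set0) ==> (B \subset M)].
Definition target_compatible M := within_target M || union_of_targets M.

Lemma compatible_target_cases M B : target_compatible M -> B \in T ->
  B :&: M != set0 -> (M \subset B) || (B \subset M).
Proof.
move=> compM TB BM0; case/orP: compM => [/exists_inP[B' TB' sMB']|/forall_inP/(_ _ TB)].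
  case/set0Pn: BM0 => u; rewrite inE => /andP[uB uM].
  by rewrite -(partition_uniq pT TB' TB (subsetP sMB' _ uM) uB) sMB'.
by rewrite BM0 /= => ->; rewrite orbT.
Qed.

Lemma compatible_sub_target M B u w : target_compatible M -> B \in T ->
  u \in M -> u \in B -> w \in B -> w \notin M -> M \subset B.
Proof.
move=> compM TB uM uB wB wM.
have BM0 : B :&: M != set0 by apply/set0Pn; exists u; rewrite inE uB uM.
case/orP: (compatible_target_cases compM TB BM0) => // /subsetP/(_ _ wB).
by rewrite (negPf wM).
Qed.

Lemma within_target1 x : within_target [set x].
Proof.
by have [B TB xB] := partition_cover pT x; apply/exists_inP; exists B; rewrite ?sub1set.
Qed.

Lemma union_of_targetsU M N :
  union_of_targets M -> union_of_targets N -> union_of_targets (M :|: N).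
Proof.
move=> /forall_inP uM /forall_inP uN; apply/forall_inP => B TB; apply/implyP.
case/set0Pn=> y; rewrite !inE => /andP[yB /orP[yM|yN]].
  have BM0 : B :&: M != set0 by apply/set0Pn; exists y; rewrite inE yB yM.
  by have := uM _ TB; rewrite BM0 => /subset_trans; apply; apply: subsetUl.
have BN0 : B :&: N != set0 by apply/set0Pn; exists y; rewrite inE yB yN.
by have := uN _ TB; rewrite BN0 => /subset_trans; apply; apply: subsetUr.
Qed.

(* Stability makes N1 prefer the rest of its target cluster B over anything outside B, whereas
   maximality of the merge makes it prefer N2 over every block inside B :\: N1. *)
Lemma compatible_merge P N1 N2 : stable S T -> is_partition P ->
  {in P, forall M, target_compatible M} -> N1 \in P -> N2 \in P -> N1 != N2 ->
  (forall Q, Q \in P -> Q != N1 -> Savg S N1 Q <= Savg S N1 N2) ->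
  ~~ union_of_targets N1 -> target_compatible (N1 :|: N2).
Proof.
move=> stab pP compP PN1 PN2 N12 maxN2 notU.
have /exists_inP[B TB sN1B] : within_target N1.
  by move: (compP _ PN1); rewrite /target_compatible (negPf notU) orbF.
have /set0Pn[x1 x1N1] := partition_neq0 pP PN1.
have N1_disj Q y : Q \in P -> Q != N1 -> y \in Q -> y \notin N1.
  move=> PQ QN1 yQ; apply: contra_neqN QN1 => yN1.
  exact: (partition_uniq pP PQ PN1 yQ yN1).
have [w wB wN1] : exists2 w, w \in B & w \notin N1.
  case/forall_inPn: notU => B' TB'; rewrite negb_imply => /andP[/set0Pn[y] yB'N1 sB'N1].
  move: yB'N1; rewrite inE => /andP[yB' yN1].
  rewrite (partition_uniq pT TB' TB yB' (subsetP sN1B _ yN1)) in sB'N1.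
  by case/subsetPn: sB'N1 => w; exists w.
have block_in_rest Q y : Q \in P -> Q != N1 -> y \in Q -> y \in B -> Q \subset B :\: N1.
  move=> PQ QN1 yQ yB.
  have x1Q : x1 \notin Q by apply: contraL x1N1; apply: N1_disj.
  have /subsetP sQB := compatible_sub_target (compP _ PQ) TB yQ yB (subsetP sN1B _ x1N1) x1Q.
  by apply/subsetP => z zQ; rewrite inE sQB // (N1_disj Q).
apply/orP; left; apply/exists_inP; exists B => //; rewrite subUset sN1B /=.
apply/subsetP => y yN2; apply/negPn/negP => yB.
have N1_0 : N1 != set0 by apply/set0Pn; exists x1.
have N1B : N1 \proper B by rewrite properE sN1B; apply/subsetPn; exists w.
have ltN2 : Savg S N1 N2 < Savg S N1 (B :\: N1).
  apply: (Savg_lt_partition pT N1_0) => [|Q TQ N2Q0]; first by apply/set0Pn; exists y.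
  have BQ : B != Q.
    apply: contraNneq yB => QB; case/set0Pn: N2Q0 => z; rewrite -QB inE => /andP[zN2 zB].
    have N21 : N2 != N1 by rewrite eq_sym.
    have sN2 := block_in_rest N2 z PN2 N21 zN2 zB.
    by have := subsetP sN2 y yN2; rewrite inE => /andP[].
  exact: (stab B Q TB TQ BQ N1 (N2 :&: Q) N1_0 N1B N2Q0 (subsetIr _ _)).
have : Savg S N1 (B :\: N1) < Savg S N1 (B :\: N1).
  apply: (Savg_lt_partition pP N1_0) => [|Q PQ /set0Pn[z]].
    by apply/set0Pn; exists w; rewrite inE wB wN1.
  rewrite !inE => /andP[/andP[zN1 zB] zQ].
  have QN1 : Q != N1 by apply: contraNneq zN1 => <-.
  by rewrite (setIidPr (block_in_rest Q z PQ QN1 zQ zB)) (le_lt_trans (maxN2 Q PQ QN1)).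
by rewrite ltxx.
Qed.

End TargetCompatible.

Lemma depth_proper (X : finType) (ms : seq ({set X} * {set X})) (M N : {set X}) :
  N \in tree_nodes ms -> M \proper N -> (depth ms N < depth ms M)%N.
Proof.
move=> tN MN; apply: proper_card; rewrite properE; apply/andP; split.
  apply/subsetP => K; rewrite !inE => /andP[-> NK] /=; exact: proper_trans MN NK.
by apply/subsetPn; exists N; rewrite inE ?tN ?MN // properxx andbF.
Qed.

Section LinkageTree.
Variables (R : realFieldType) (X : finType) (S : X -> X -> R) (T : {set {set X}}).
Variable ms : seq ({set X} * {set X}).
Hypotheses (pT : is_partition T) (stab : stable S T) (SC : forall x y, S x y = S y x).
Hypothesis linkage : avg_linkage_tree S ms.
Implicit Types (P : {set {set X}}) (B M N : {set X}).

Lemma linkage_partS i : (i < size ms)%N ->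
  linkage_part ms i.+1 = merge_part (linkage_part ms i) (nth (set0, set0) ms i).
Proof. by move=> ltim; rewrite /linkage_part (take_nth (set0, set0) ltim) foldl_rcons. Qed.

Lemma is_partition_singletons : is_partition (singletons X).
Proof.
split=> [|x|B B' x /imsetP[y _ ->] /imsetP[z _ ->]]; last by rewrite !inE => /eqP-> /eqP->.
- by apply/imsetP => -[x _ /setP/(_ x)]; rewrite !inE eqxx.
- by exists [set x]; rewrite ?imset_f ?set11.
Qed.

Lemma compatible_linkage_merge P p :
  is_partition P -> {in P, forall M, target_compatible T M} ->
  p.1 \in P -> p.2 \in P -> p.1 != p.2 ->
  (forall M1 M2, M1 \in P -> M2 \in P -> M1 != M2 -> Savg S M1 M2 <= Savg S p.1 p.2) ->
  target_compatible T (p.1 :|: p.2).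
Proof.
move=> pP compP P1 P2 p12 maxp.
have [U1|notU1] := boolP (union_of_targets T p.1); last first.
  apply: (compatible_merge pT stab pP compP P1 P2 p12 _ notU1) => Q PQ Qp1.
  by apply: maxp; rewrite // eq_sym.
have [U2|notU2] := boolP (union_of_targets T p.2).
  by apply/orP; right; apply: union_of_targetsU.
rewrite setUC; apply: (compatible_merge pT stab pP compP P2 P1 _ _ notU2).
  by rewrite eq_sym.
by move=> Q PQ Qp2; rewrite SavgC // [Savg S p.2 p.1]SavgC //; apply: maxp; rewrite // eq_sym.
Qed.

Lemma linkage_part_invariant i : (i <= size ms)%N ->
  is_partition (linkage_part ms i) /\
  {in linkage_part ms i, forall B, target_compatible T B /\ B \in tree_nodes ms}.
Proof.
elim: i => [_|i IH ltim].
  rewrite /linkage_part take0 /=; split; first exact: is_partition_singletons.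
  move=> B sB; split; last by rewrite /tree_nodes inE sB.
  by case/imsetP: sB => x _ ->; rewrite /target_compatible within_target1.
have [pP invP] := IH (ltnW ltim).
have [P1 P2 p12 maxp] := linkage.1 i ltim.
rewrite linkage_partS //; split; first exact: is_partition_merge_part.
move=> B /setU1P[->|/setD1P[_ /setD1P[_ /invP//]]].
split; last first.
  rewrite /tree_nodes inE; apply/orP; right; apply/imsetP.
  by exists (nth (set0, set0) ms i); rewrite ?mem_nth.
by apply: (compatible_linkage_merge pP) => // M /invP[].
Qed.

Lemma merge_children p : p \in ms ->
  [/\ p.1 \in tree_nodes ms, p.2 \in tree_nodes ms, p.1 != set0, p.2 != set0 &
      [disjoint p.1 & p.2]].
Proof.
move=> msp; have ltim : (index p ms < size ms)%N by rewrite index_mem.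
have [P1 P2 p12 _] := linkage.1 _ ltim; rewrite nth_index // in P1 P2 p12.
have [pP invP] := linkage_part_invariant (ltnW ltim).
split; [exact: (invP _ P1).2 | exact: (invP _ P2).2 | exact: partition_neq0 P1
       | exact: partition_neq0 P2 |].
apply/pred0P => x /=; apply/negP => /andP[x1 x2].
by move: p12; rewrite (partition_uniq pP P1 P2 x1 x2) eqxx.
Qed.

Lemma tree_nodes_compatible N : N \in tree_nodes ms -> target_compatible T N.
Proof.
rewrite inE => /orP[/imsetP[x _ ->]|/imsetP[p msp ->]].
  by rewrite /target_compatible within_target1.
have ltim : (index p ms < size ms)%N by rewrite index_mem.
have [_ invP] := linkage_part_invariant ltim.
rewrite linkage_partS // nth_index // in invP.
by case: (invP (p.1 :|: p.2)); rewrite // /merge_part setU11.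
Qed.

End LinkageTree.

Section MoveErrors.
Variables (X : finType) (T : {set {set X}}).
Hypothesis pT : is_partition T.
Implicit Types (P Q : {set {set X}}) (Ci Cj Cl M : {set X}).

Lemma move_subblock_delta_lt P Q Ci Cj M Cl :
  is_partition P -> Ci \in P -> Cj \in P -> Ci != Cj ->
  M \subset Cj -> M \subset Cl -> Cl \in T -> M != set0 ->
  (#|(Ci :\: Cl) :|: (Cj :\: M)| < #|Ci :&: Cl|)%N ->
  Q = ([set Ci :|: M; Cj :\: M] :|: ((P :\ Ci) :\ Cj)) :\ set0 ->
  is_partition Q /\ (delta_cc Q T < delta_cc P T)%N.
Proof.
move=> pP PCi PCj Cij sMj sMl TCl M0 ltVW defQ.
have [pQ scQ_same scQ_moved] := move_subblock pP PCi PCj Cij sMj defQ.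
split=> //.
have disj x : x \in Ci -> x \in Cj = false.
  by move=> xi; apply/negP => xj; move: Cij; rewrite (partition_uniq pP PCi PCj xi xj) eqxx.
set W := Ci :&: Cl; set V := (Ci :\: Cl) :|: (Cj :\: M).
have WM x : x \in W -> x \notin M.
  by rewrite inE => /andP[/disj xj _]; apply: contraFN xj => /(subsetP sMj).
have moved u v : u \in M -> v \notin M -> same_cluster Q u v != same_cluster T u v ->
    (same_cluster P u v != same_cluster T u v) && (v \notin W) || (v \in V).
  move=> uM vM; rewrite scQ_moved // (same_clusterE _ pP PCj (subsetP sMj _ uM)).
  rewrite (same_clusterE _ pT TCl (subsetP sMl _ uM)) !inE (negPf vM) /=.
  have [vi|_] := boolP (v \in Ci); first by rewrite (disj _ vi); case: (v \in Cl).
  by case: (v \in Cj); case: (v \in Cl).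
have notW x : x \in M -> x \notin W by move=> xM; apply: contraL xM; apply: WM.
have errP u v : ((u, v) \in cc_errors P T) = (same_cluster P u v != same_cluster T u v).
  by rewrite inE.
rewrite !delta_ccE; apply: (card_exchange_lt (G := setX M W :|: setX W M)
  (L := setX M V :|: setX V M)).
- apply/subsetP => -[u v]; rewrite inE /= => err.
  rewrite in_setU in_setD errP !in_setU !in_setX /=.
  have [uM|uM] := boolP (u \in M); have [vM|vM] := boolP (v \in M).
  + by rewrite -scQ_same ?uM ?vM // err (negPf (notW _ uM)) (negPf (notW _ vM)).
  + by case/orP: (moved _ _ uM vM err) => [/andP[-> /negPf->]|->]; rewrite ?andbF ?orbT.
  + rewrite same_clusterC [same_cluster T _ _]same_clusterC in err.
    case/orP: (moved _ _ vM uM err) => [/andP[errvu /negPf->]|->]; last by rewrite !orbT.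
    by rewrite same_clusterC [same_cluster T _ _]same_clusterC errvu.
  + by rewrite -scQ_same ?(negPf uM) ?(negPf vM) // err !andbF.
- apply/subsetP => -[u v]; rewrite in_setU !in_setX errP /=.
  have gain x y : x \in M -> y \in W -> same_cluster P x y != same_cluster T x y.
    move=> xM; rewrite inE => /andP[yi yl].
    rewrite (same_clusterE _ pP PCj (subsetP sMj _ xM)) disj //.
    by rewrite (same_clusterE _ pT TCl (subsetP sMl _ xM)) yl.
  case/orP=> /andP[uMW vMW]; first exact: gain.
  by rewrite same_clusterC [same_cluster T _ _]same_clusterC gain.
have GI0 : setX M W :&: setX W M = set0.
  apply/setP => -[u v]; rewrite in_setI !in_setX in_set0 /=.
  by case uM: (u \in M); rewrite ?(negPf (notW _ uM)) ?andbF.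
rewrite [#|setX M W :|: _|]cardsU GI0 cards0 subn0; apply: leq_ltn_trans (leq_card_setU _ _) _.
rewrite !cardsX [(#|V| * _)%N]mulnC [(#|W| * _)%N]mulnC !addnn ltn_double ltn_pmul2l //.
by rewrite card_gt0.
Qed.

End MoveErrors.

Section EtaBig.
Variables (R : realFieldType) (X : finType) (eta : R).
Implicit Types (A B C N Cl Ci Cj : {set X}).

Lemma eta_big_subset A B C : eta_big eta A C -> A \subset B -> eta_big eta B C.
Proof.
by move=> bigA sAB; apply: le_trans bigA _; rewrite ler_nat; apply/subset_leq_card/setSI.
Qed.

Lemma eta_big_meet A B C : 1 / 2 < eta -> C != set0 ->
  eta_big eta A C -> eta_big eta B C -> A :&: B :&: C != set0.
Proof.
move=> eta_gt C0 bigA bigB; apply/negP => /eqP ABC0.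
have disj : (A :&: C) :&: (B :&: C) = set0 by rewrite setIACA setIid.
have : (#|A :&: C| + #|B :&: C| <= #|C|)%N.
  have := cardsUI (A :&: C) (B :&: C); rewrite disj cards0 addn0 => <-.
  by apply/subset_leq_card; rewrite subUset !subsetIr.
rewrite -(ler_nat R) natrD; have : (1 <= #|C|%:R :> R) by rewrite ler1n card_gt0.
rewrite /eta_big in bigA bigB; nra.
Qed.

Lemma eta_big_excess_lt Ci Cj Cl N : 2 / 3 < eta -> Ci != set0 ->
  eta_big eta Cl Ci -> eta_big eta N Cj -> (#|Cj| <= #|Ci|)%N ->
  (#|Ci :\: Cl| + #|Cj :\: N| < #|Ci :&: Cl|)%N.
Proof.
move=> eta_gt Ci0; rewrite /eta_big [Cl :&: _]setIC [N :&: _]setIC -(ltr_nat R) natrD.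
move=> bigCl bigN; rewrite -(ler_nat R) => leji.
have ei : #|Ci :&: Cl|%:R + #|Ci :\: Cl|%:R = #|Ci|%:R :> R by rewrite -natrD cardsID.
have ej : #|Cj :&: N|%:R + #|Cj :\: N|%:R = #|Cj|%:R :> R by rewrite -natrD cardsID.
have Ci1 : 1 <= #|Ci|%:R :> R by rewrite ler1n card_gt0.
have x1 := ler0n R #|Ci :\: Cl|; have x2 := ler0n R #|Cj :\: N|.
have eta_le1 : eta <= 1.
  by rewrite -(ler_pM2r (lt_le_trans ltr01 Ci1)) mul1r; apply: le_trans bigCl _; lra.
have : 0 <= (1 - eta) * (#|Ci|%:R - #|Cj|%:R) by apply: mulr_ge0; lra.
have : 0 < (3 * eta - 2) * #|Ci|%:R by apply: mulr_gt0; lra.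
lra.
Qed.

End EtaBig.

Lemma merge_into_larger (R : realFieldType) (X : finType) (eta : R)
    (T P Q : {set {set X}}) (Ci Cj Cl N : {set X}) :
  is_partition T -> is_partition P -> Ci \in P -> Cj \in P -> Ci != Cj -> Cl \in T ->
  2 / 3 < eta -> eta_big eta Cl Ci -> eta_big eta N Cj -> N \subset Cl ->
  (#|Cj| <= #|Ci|)%N ->
  Q = ([set Ci :|: N :&: Cj; Cj :\: N] :|: ((P :\ Ci) :\ Cj)) :\ set0 ->
  is_partition Q /\ (delta_cc Q T < delta_cc P T)%N.
Proof.
move=> pT pP PCi PCj Cij TCl eta_gt bigCl bigN sNCl leji defQ.
have CjN : Cj :\: (N :&: Cj) = Cj :\: N by rewrite setDIr setDv setU0.
have Ci0 := partition_neq0 pP PCi.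
have sMCl : N :&: Cj \subset Cl by apply: subset_trans sNCl; apply: subsetIl.
apply: (move_subblock_delta_lt pT pP PCi PCj Cij (subsetIr N Cj) sMCl TCl).
- rewrite -card_gt0 -(ltr_nat R); apply: lt_le_trans bigN; apply: mulr_gt0; first lra.
  by rewrite ltr0n card_gt0 (partition_neq0 pP PCj).
- apply: leq_ltn_trans (leq_card_setU _ _) _; rewrite CjN.
  exact: (eta_big_excess_lt eta_gt Ci0 bigCl bigN leji).
- by rewrite CjN.
Qed.

Section EditRequests.
Variables (X : finType) (T : {set {set X}}) (ms : seq ({set X} * {set X})).
Hypothesis pT : is_partition T.
Hypothesis children : forall p, p \in ms ->
  [/\ p.1 \in tree_nodes ms, p.2 \in tree_nodes ms, p.1 != set0, p.2 != set0 &
      [disjoint p.1 & p.2]].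
Hypothesis tree_compatible : forall N, N \in tree_nodes ms -> target_compatible T N.
Implicit Types (P Q : {set {set X}}) (B C M N : {set X}).

Lemma depth_children_lt p : p \in ms ->
  (depth ms (p.1 :|: p.2) < depth ms p.1)%N /\ (depth ms (p.1 :|: p.2) < depth ms p.2)%N.
Proof.
move=> msp; have [_ _ /set0Pn[x1 x1p] /set0Pn[x2 x2p] dis] := children msp.
have tp : p.1 :|: p.2 \in tree_nodes ms.
  by rewrite /tree_nodes inE; apply/orP; right; apply/imsetP; exists p.
split; apply: depth_proper tp _; rewrite properE ?subsetUl ?subsetUr /=; apply/subsetPn.
  by exists x2; rewrite ?inE ?x2p ?orbT // (disjointFl dis x2p).
by exists x1; rewrite ?inE ?x1p // (disjointFr dis x1p).
Qed.

Lemma deepest_cover_meets_children p C : p \in ms -> C \subset p.1 :|: p.2 ->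
  (forall M, M \in tree_nodes ms -> C \subset M -> (depth ms M <= depth ms (p.1 :|: p.2))%N) ->
  C :&: p.1 != set0 /\ C :&: p.2 != set0.
Proof.
move=> msp sCp deepest; have [t1 t2 _ _ _] := children msp.
have [lt1 lt2] := depth_children_lt msp.
split; apply/negP => CM0.
  by have := deepest _ t2 (subsetU_setI0 sCp CM0); rewrite leqNgt lt2.
rewrite setUC in sCp.
by have := deepest _ t1 (subsetU_setI0 sCp CM0); rewrite leqNgt lt1.
Qed.

Lemma children_separated p C u v : p \in ms -> C \subset p.1 :|: p.2 ->
  (exists A B, [/\ A \in T, B \in T, A != B, C :&: A != set0 & C :&: B != set0]) ->
  u \in p.1 -> v \in p.2 -> ~~ same_cluster T u v.
Proof.
move=> msp sCp [A [B [TA TB AB CA CB]]] up vp.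
have [t1 t2 _ _ dis] := children msp.
apply/existsP => -[B0 /and3P[TB0 uB0 vB0]].
have s1 := compatible_sub_target pT (tree_compatible t1) TB0 up uB0 vB0 (negbT (disjointFl dis vp)).
have s2 := compatible_sub_target pT (tree_compatible t2) TB0 vp vB0 uB0 (negbT (disjointFr dis up)).
have /subsetP sCB0 : C \subset B0 by apply: subset_trans sCp _; rewrite subUset s1.
case/set0Pn: CA => a; case/set0Pn: CB => b; rewrite !inE => /andP[bC bB] /andP[aC aA].
move: AB; rewrite (partition_uniq pT TA TB0 aA (sCB0 _ aC)).
by rewrite (partition_uniq pT TB TB0 bB (sCB0 _ bC)) eqxx.
Qed.

Lemma split_step P C Q : is_partition P ->
  split_allowed T P C -> split_result ms P C Q ->
  is_partition Q /\ (delta_cc Q T < delta_cc P T)%N.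
Proof.
move=> pP [PC multi] [N [N1 [N2 [_ sCN deepest [msN eN] defQ]]]]; subst N.
have [_ _ _ _ /= dis] := children msN.
have [/= CN1 CN2] := deepest_cover_meets_children msN sCN deepest.
have CN2E : C :&: N2 = C :\: N1.
  apply/setP => x; rewrite !inE; have [xC|] := boolP (x \in C); rewrite ?andbT ?andbF //.
  have /setUP[x1|x2] := subsetP sCN _ xC; first by rewrite x1 (disjointFr dis x1).
  by rewrite x2 (disjointFl dis x2).
rewrite CN2E in CN2 defQ; have [pQ scQ] := split_block pP PC CN1 CN2 defQ.
have sep u v : u \in C -> v \in C -> (u \in N1) != (v \in N1) -> ~~ same_cluster T u v.
  have side x : x \in C -> x \notin N1 -> x \in N2.
    by move=> xC; have /setUP[->|] // := subsetP sCN _ xC.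
  move=> uC vC; have [u1|u2] := boolP (u \in N1); have [v1|v2] //= := boolP (v \in N1) => _.
    exact: (children_separated msN sCN multi u1 (side _ vC v2)).
  by rewrite same_clusterC; apply: (children_separated msN sCN multi v1 (side _ uC u2)).
split=> //; rewrite !delta_ccE; apply: proper_card; apply/properP; split.
  apply/subsetP => -[u v]; rewrite !inE /= scQ.
  have [uC|_] /= := boolP (u \in C); last by rewrite andbT.
  have [_|diff] /= := eqVneq (u \in N1) (v \in N1); first by rewrite andbT.
  rewrite andbF (same_clusterE _ pP PC uC); have [vC|] //= := boolP (v \in C).
  by rewrite (negPf (sep _ _ uC vC diff)).
have /set0Pn[u] := CN1; have /set0Pn[v] := CN2; rewrite !inE => /andP[vN1 vC] /andP[uC uN1].
have diff : (u \in N1) != (v \in N1) by rewrite uN1 vN1.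
have notT := negPf (sep _ _ uC vC diff).
exists (u, v); rewrite !inE /= ?scQ (same_clusterE _ pP PC uC) vC notT //.
by rewrite uC (negPf diff).
Qed.

Lemma target_in_child p Cl : p \in ms -> Cl \in T ->
  Cl \subset p.1 :|: p.2 -> Cl != p.1 :|: p.2 -> (Cl \subset p.1) || (Cl \subset p.2).
Proof.
move=> msp TCl sCl Cl_neq; have [t1 t2 _ _ _] := children msp.
have [Cl1|Cl1] := eqVneq (Cl :&: p.1) set0.
  by rewrite (subsetU_setI0 sCl) ?Cl1 ?orbT.
have [Cl2|Cl2] := eqVneq (Cl :&: p.2) set0.
  by rewrite setUC in sCl; rewrite (subsetU_setI0 sCl) ?Cl2.
case/orP: (compatible_target_cases pT (tree_compatible t2) TCl Cl2) => [s2|->]; last first.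
  by rewrite orbT.
case/orP: (compatible_target_cases pT (tree_compatible t1) TCl Cl1) => [s1|->] //.
by case/eqP: Cl_neq; apply/eqP; rewrite eqEsubset sCl subUset s1 s2.
Qed.

(* A target cluster strictly inside N lies in a child of N, which would be a deeper node
   that is eta-big for both clusters. *)
Lemma deepest_big_node_sub_target (R : realFieldType) (eta : R) N Ci Cj Cl :
  N \in tree_nodes ms ->
  (forall M, M \in tree_nodes ms -> eta_big eta M Ci -> eta_big eta M Cj ->
     (depth ms M <= depth ms N)%N) ->
  Cl \in T -> eta_big eta Cl Ci -> eta_big eta Cl Cj -> Cl :&: N != set0 -> N \subset Cl.
Proof.
move=> tN deepest TCl bigi bigj ClN0.
case/orP: (compatible_target_cases pT (tree_compatible tN) TCl ClN0) => // sClN.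
have [<-//|ClN] := eqVneq Cl N; exfalso.
move: tN sClN ClN deepest; rewrite /tree_nodes inE => /orP[/imsetP[x _ ->]|/imsetP[p msp ->]].
  rewrite subset1 (negPf (partition_neq0 pT TCl)) orbF => /eqP-> //.
  by rewrite eqxx.
move=> sClp Clp deepest; have [t1 t2 _ _ _] := children msp.
have [lt1 lt2] := depth_children_lt msp.
case/orP: (target_in_child msp TCl sClp Clp) => sCl.
  have := deepest _ t1 (eta_big_subset bigi sCl) (eta_big_subset bigj sCl).
  by rewrite leqNgt lt1.
have := deepest _ t2 (eta_big_subset bigi sCl) (eta_big_subset bigj sCl).
by rewrite leqNgt lt2.
Qed.

Lemma merge_step (R : realFieldType) (eta : R) P Ci Cj Q : is_partition P -> 2 / 3 < eta ->
  merge_allowed eta T P Ci Cj -> merge_result eta ms P Ci Cj Q ->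
  is_partition Q /\ (delta_cc Q T < delta_cc P T)%N.
Proof.
move=> pP eta_gt [PCi PCj Cij [Cl /and3P[TCl bigi bigj]]] [N [tN bigNi bigNj deepest defQ]].
have sNCl : N \subset Cl.
  apply: (deepest_big_node_sub_target tN deepest TCl bigi bigj).
  have eta_half : 1 / 2 < eta by lra.
  have := eta_big_meet eta_half (partition_neq0 pP PCi) bigNi bigi.
  by apply: contraNneq => ClN0; rewrite [N :&: Cl]setIC ClN0 set0I.
move: defQ; case: ifP => [leji|/negbT ltij] defQ.
  exact: (merge_into_larger pT pP PCi PCj Cij TCl eta_gt bigi bigNj sNCl leji defQ).
rewrite -ltnNge in ltij.
apply: (merge_into_larger pT pP PCj PCi _ TCl eta_gt bigj bigNi sNCl (ltnW ltij)).
  by rewrite eq_sym.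
rewrite defQ; congr (_ :\ _); congr (_ :|: _); first exact: setUC.
by rewrite !setDDl setUC.
Qed.

Lemma edit_run_delta (R : realFieldType) (eta : R) P0 Ps :
  is_partition P0 -> 2 / 3 < eta -> edit_run eta T ms P0 Ps ->
  forall i, (i <= size Ps)%N -> is_partition (nth P0 (P0 :: Ps) i) /\
    (delta_cc (nth P0 (P0 :: Ps) i) T + i <= delta_cc P0 T)%N.
Proof.
move=> pP0 eta_gt run; elim=> [|i IH lti]; first by rewrite addn0.
have [pPi le_i] := IH (ltnW lti); have [_ step] := run i lti.
have [pQ ltQ] : is_partition (nth P0 Ps i) /\
    (delta_cc (nth P0 Ps i) T < delta_cc (nth P0 (P0 :: Ps) i) T)%N.
  case: step => [[C [allowed res]]|[Ci [Cj [allowed res]]]].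
    exact: split_step pPi allowed res.
  exact: merge_step pPi eta_gt allowed res.
by split=> //; rewrite addnS; apply: leq_trans le_i; rewrite ltn_add2r.
Qed.

End EditRequests.

Unset Implicit Arguments.

Theorem theorem15 (R : realFieldType) (X : finType) (S : X -> X -> R)
  (T P0 : {set {set X}}) (ms : seq ({set X} * {set X})) (eta : R)
  (Ps : seq {set {set X}}) :
  (forall x y, S x y = S y x) ->
  partition T [set: X] ->
  stable S T ->
  partition P0 [set: X] ->
  avg_linkage_tree S ms ->
  2 / 3 < eta ->
  edit_run eta T ms P0 Ps ->
  (size Ps <= delta_cc P0 T)%N.
Proof.
move=> SC partT stab partP0 linkage eta_gt run.
have pT := partition_setT_is_partition partT.
have children := merge_children pT stab SC linkage.
have compatible := tree_nodes_compatible pT stab SC linkage.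
have [_ bound] := edit_run_delta pT children compatible
  (partition_setT_is_partition partP0) eta_gt run (leqnn (size Ps)).
by apply: leq_trans bound; rewrite leq_addl.
Qed.
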